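(* Let $n\ge1$ and $p$ a prime. The radical $\mathcal{R}(n,p)$ of the $p$-modular descent algebra $\Sigma(n,p)$ is contained in the kernel of the homomorphism $\phi:\Sigma(n,p)\to G(n,p)$.
   Context: A composition of $n$ is a sequence of positive integers with sum $n$. The descent algebra $\Sigma_n$ has basis $\{B_q\}$ indexed by compositions of $n$ with multiplication $B_qB_r=\sum_{Z\in S(q,r)}B_{c(Z)}$, where for $q=[a_1,\dots,a_s]$, $r=[b_1,\dots,b_t]$, $S(q,r)$ is the set of $s\times t$ non-negative integer matrices with row sums $a_i$ and column sums $b_j$, and $c(Z)$ is the composition obtained by reading the entries of $Z$ row by row and omitting zeros. Let $\mathcal{Z}_n$ be the subring of integral combinations of the $B_q$ and $\Sigma(n,p)=\mathcal{Z}_n/p\mathcal{Z}_n$, an $\mathbb{F}_p$-algebra with basis $\overline{B}_q$ (images of $B_q$); $\mathcal{R}(n,p)$ denotes its (Jacobson) radical. For a composition $q=[a_1,\dots,a_r]$ let $\chi_q$ be the permutation character of $S_n$ induced from the trivial character of the Young subgroup $S_{a_1}\times\cdots\times S_{a_r}$, let $G_n$ be the ring (under pointwise operations) of integral combinations of the $\chi_q$, and let $G(n,p)$ be the $\mathbb{F}_p$-algebra obtained by reducing all character values of elements of $G_n$ modulo $p$; write $\tilde\chi_q$ for the reduction of $\chi_q$. The map $\phi:\Sigma(n,p)\to G(n,p)$ is the $\mathbb{F}_p$-linear map with $\phi(\overline{B}_q)=\tilde\chi_q$ for all compositions $q$; it is a surjective homomorphism of $\mathbb{F}_p$-algebras (as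 a consequence of Solomon's theorem that $B_q\mapsto\chi_q$ defines a ring homomorphism $\mathcal{Z}_n\to G_n$). *)

From HB Require Import structures.
From mathcomp Require Import all_boot all_order all_algebra all_fingroup.
Set Implicit Arguments. Unset Strict Implicit. Unset Printing Implicit Defensive.
Import GRing.Theory.
Local Open Scope ring_scope.

Fixpoint seqs_len (k m : nat) : seq (seq nat) :=
  if k is k'.+1 then [seq a :: s | a <- iota 0 m.+1, s <- seqs_len k' m]
  else [:: [::]].

(* all sequences of length <= n with entries in [0, n]; every composition
   of n is among them *)
Definition allseqs (n : nat) : seq (seq nat) :=
  flatten [seq seqs_len k n | k <- iota 0 n.+1].

Definition is_comp (n : nat) (s : seq nat) : bool :=
  all (fun a => 0 < a)%N s && (sumn s == n).

Definition comps (n : nat) : seq (seq nat) := filter (is_comp n) (allseqs n).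

Definition comp (n : nat) := seq_sub (comps n).

(* Z in S(q,r): non-negative integer matrices (entries are <= n automatically,
   since row sums are parts of q) with row sums a_i and column sums b_j *)
Definition inS (n : nat) (q r : seq nat)
  (Z : 'M['I_n.+1]_(size q, size r)) : bool :=
  [forall i : 'I_(size q), (\sum_(j < size r) val (Z i j))%N == nth 0%N q i] &&
  [forall j : 'I_(size r), (\sum_(i < size q) val (Z i j))%N == nth 0%N r j].

Definition cZ (n : nat) (s t : nat) (Z : 'M['I_n.+1]_(s, t)) : seq nat :=
  filter (fun a => a != 0)%N
    [seq val (Z i j) | i <- enum 'I_s, j <- enum 'I_t].

Definition struct_const (n : nat) (q r c : seq nat) : nat :=
  #|[set Z : 'M['I_n.+1]_(size q, size r) | inS Z & cZ Z == c]|.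

(* elements: F_p-linear combinations of the basis vectors \bar B_q *)
Notation Sig n p := {ffun comp n -> 'F_p}.

Definition Bbar (n p : nat) (q : comp n) : Sig n p :=
  [ffun r => (r == q)%:R].

(* \bar B_q \bar B_r, reduced mod p *)
Definition Bprod (n p : nat) (q r : comp n) : Sig n p :=
  [ffun c : comp n => (struct_const n (ssval q) (ssval r) (ssval c))%:R].

Definition smul (n p : nat) (x y : Sig n p) : Sig n p :=
  [ffun c : comp n =>
     \sum_(q : comp n) \sum_(r : comp n) x q * y r * Bprod p q r c].

Definition left_ideal (n p : nat) (I : {set Sig n p}) : Prop :=
  [/\ 0 \in I,
      forall x y, x \in I -> y \in I -> x + y \in I,
      forall (c : 'F_p) x, x \in I -> [ffun i => c * x i] \in I &
      forall a x, x \in I -> smul a x \in I].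

Definition maximal_left_ideal (n p : nat) (I : {set Sig n p}) : Prop :=
  [/\ left_ideal I, I != setT &
      forall J : {set Sig n p}, left_ideal J -> I \subset J ->
        J = I \/ J = setT].

Definition in_radical (n p : nat) (x : Sig n p) : Prop :=
  forall I : {set Sig n p}, maximal_left_ideal I -> x \in I.

Definition psums (s : seq nat) : seq nat :=
  [seq sumn (take i.+1 s) | i <- iota 0 (size s)].

(* index of the block of {0,...,n-1} containing k *)
Definition blk (s : seq nat) (k : nat) : nat := find (fun m => k < m)%N (psums s).

Definition Young (n : nat) (s : seq nat) : {set 'S_n} :=
  [set g : 'S_n | [forall k : 'I_n, blk s (g k) == blk s k]].

(* chi_q(g) = permutation character of S_n on the cosets of the Young
   subgroup (= induced character of the trivial character) *)
Definition chi (n : nat) (q : comp n) (g : 'S_n) : nat :=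
  #|[set C in rcosets (Young n (ssval q)) [set: 'S_n] | (C :* g)%g == C]|.

(* x in ker phi : phi(x) = sum_q x_q chi~_q is the zero function mod p *)
Definition in_ker_phi (n p : nat) (x : Sig n p) : Prop :=
  forall g : 'S_n, \sum_(q : comp n) x q * (chi q g)%:R = 0 :> 'F_p.

From Pilot Require Import Defs.
From mathcomp Require Import all_boot all_order all_algebra all_fingroup.
Set Implicit Arguments. Unset Strict Implicit. Unset Printing Implicit Defensive.

(* For a fixed permutation g, the value of phi(x) at g is a linear form on
   Sigma(n,p) which is multiplicative, by Solomon's theorem evaluated at g.
   Its kernel is therefore a left ideal of codimension at most one, hence a
   maximal left ideal unless it is everything, and it contains the radical.

   Solomon's identity chi_q chi_r = sum_(Z in S(q,r)) chi_c(Z) at g is proved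
   by counting: chi_q(g) is the number of g-invariant colourings of
   {0,...,n-1} whose colour classes have the sizes listed in q; a pair of such
   colourings for q and r is recorded by the matrix Z in S(q,r) of sizes of
   intersections of classes, and the pairs with a given Z are the colourings
   by the nonzero cells of Z, i.e. the colourings for c(Z). *)

Lemma mem_seqs_len k m s :
  size s = k -> all (fun a => a <= m) s -> s \in seqs_len k m.
Proof.
elim: k s => [|k IHk] [|a s] // [size_s] /andP[am sm].
by apply/allpairsP; exists (a, s); rewrite mem_iota ltnS am; split=> //; exact: IHk.
Qed.

Lemma leq_sumn_mem s a : a \in s -> a <= sumn s.
Proof.
elim: s => //= b s IHs; rewrite inE => /orP[/eqP-> | /IHs]; first exact: leq_addr.
by move/leq_trans; apply; apply: leq_addl.
Qed.

Lemma size_leq_sumn s : all (fun a => 0 < a) s -> size s <= sumn s.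
Proof. by elim: s => //= a s IHs /andP[a_gt0 /IHs]; rewrite -add1n; apply: leq_add. Qed.

Lemma size_comp_leq n s : is_comp n s -> size s <= n.
Proof. by case/andP=> s_pos /eqP <-; apply: size_leq_sumn. Qed.

Lemma mem_comps n s : is_comp n s -> s \in comps n.
Proof.
move=> s_comp; rewrite mem_filter s_comp; have size_s := size_comp_leq s_comp.
case/andP: s_comp => _ /eqP sum_s; apply/flattenP; exists (seqs_len (size s) n).
  by apply/mapP; exists (size s); rewrite // mem_iota ltnS.
by apply: mem_seqs_len => //; apply/allP => a /leq_sumn_mem; rewrite sum_s.
Qed.

Lemma card_in_bij (aT rT : finType) (A : {set aT}) (B : {set rT})
    (f : aT -> rT) (g : rT -> aT) :
  {in A, forall x, f x \in B} -> {in B, forall y, g y \in A} ->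
  {in A, cancel f g} -> {in B, cancel g f} -> #|A| = #|B|.
Proof.
have leq_bij (T T' : finType) (X : {set T}) (Y : {set T'}) (u : T -> T') v :
    {in X, forall x, u x \in Y} -> {in X, cancel u v} -> #|X| <= #|Y|.
  move=> uXY uK; rewrite -(card_in_imset (can_in_inj uK)); apply: subset_leq_card.
  by apply/subsetP => _ /imsetP[x Xx ->]; apply: uXY.
move=> fAB gBA fK gK; apply/eqP.
by rewrite eqn_leq !(leq_bij _ _ _ _ f g, leq_bij _ _ _ _ g f).
Qed.

Lemma index_eq_mem (T : eqType) (s : seq T) x y :
  x \in s -> (index x s == index y s) = (x == y).
Proof.
move=> x_s; apply/eqP/eqP => [eq_idx | -> //].
have y_s : y \in s by rewrite -index_mem -eq_idx index_mem.
exact: (@index_inj _ x s) eq_idx.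
Qed.

Lemma comp_is_comp n (q : Defs.comp n) : is_comp n (ssval q).
Proof. by have := ssvalP q; rewrite mem_filter => /andP[]. Qed.

Lemma psums_cons a s : psums (a :: s) = a :: map (addn a) (psums s).
Proof.
rewrite /psums /= -add1n iotaDl -map_comp /= take0 addn0; congr (_ :: _).
by rewrite -map_comp; apply: eq_map.
Qed.

Lemma blk_cons a s k : blk (a :: s) k = if k < a then 0 else (blk s (k - a)).+1.
Proof.
rewrite /blk psums_cons /=; case: ifP => // k_ge_a; congr S.
by rewrite find_map; apply: eq_find => m /=; rewrite ltn_subLR // leqNgt k_ge_a.
Qed.

Lemma blk_leq_size s k : blk s k <= size s.
Proof. by rewrite (leq_trans (find_size _ _)) // size_map size_iota. Qed.

Lemma count_blk s i : count (fun k => blk s k == i) (iota 0 (sumn s)) = nth 0 s i.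
Proof.
elim: s i => [|a s IHs] i /=; first by rewrite nth_nil.
rewrite iotaD count_cat add0n -[in iota a _](addn0 a) iotaDl count_map.
rewrite (@eq_in_count _ _ (fun=> i == 0)); last first.
  by move=> k; rewrite mem_iota add0n /= => k_lt_a; rewrite blk_cons k_lt_a eq_sym.
rewrite (@eq_count _ _ (fun k => (i != 0) && (blk s k == i.-1))); last first.
  by move=> k /=; rewrite blk_cons ltnNge leq_addr addKn; case: i.
case: i => [|i] /=; first by rewrite count_pred0 addn0 count_predT size_iota.
by rewrite count_pred0 IHs.
Qed.

Lemma sumn_takeS s i : i < size s -> sumn (take i.+1 s) = sumn (take i s) + nth 0 s i.
Proof. by move=> i_lt; rewrite (take_nth 0 i_lt) sumn_rcons. Qed.

Lemma leq_sumn_take s i : sumn (take i s) <= sumn s.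
Proof. by rewrite -{2}(cat_take_drop i s) sumn_cat leq_addr. Qed.

Lemma blk_take s i k : i < size s ->
  sumn (take i s) <= k < sumn (take i s) + nth 0 s i -> blk s k = i.
Proof.
elim: s i k => [|a s IHs] [|i] k //=; first by rewrite add0n blk_cons => _ ->.
move=> i_lt /andP[le_k lt_k]; have a_le_k := leq_trans (leq_addr _ _) le_k.
rewrite blk_cons ltnNge a_le_k /=; congr S; apply: IHs => //.
by rewrite leq_subRL // le_k ltn_subLR // addnA.
Qed.

Definition fibre_card n (f : {ffun 'I_n -> 'I_n.+1}) (i : nat) : nat :=
  #|[set k | f k == i :> nat]|.

Definition colourings n (s : seq nat) (g : 'S_n) : {set {ffun 'I_n -> 'I_n.+1}} :=
  [set f : {ffun 'I_n -> 'I_n.+1} | [forall k, f (g k) == f k] &&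
                                      [forall i : 'I_n.+1, fibre_card f i == nth 0 s i]].

Section Colourings.
Variables (n : nat) (s : seq nat) (g : 'S_n) (f : {ffun 'I_n -> 'I_n.+1}).
Hypothesis f_col : f \in colourings s g.

Lemma colouringJ k : f (g k) = f k.
Proof. by move: f_col; rewrite inE => /andP[/forallP/(_ k)/eqP]. Qed.

Lemma fibre_card_colouring i : i < n.+1 -> fibre_card f i = nth 0 s i.
Proof. by move=> i_lt; move: f_col; rewrite inE => /andP[_ /forallP/(_ (Ordinal i_lt))/eqP]. Qed.

Lemma colour_lt_size k : f k < size s.
Proof.
rewrite ltnNge; apply/negP => size_le; have := fibre_card_colouring (ltn_ord (f k)).
rewrite nth_default // /fibre_card => /eqP; rewrite cards_eq0 => /eqP/setP/(_ k).
by rewrite !inE eqxx.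
Qed.

End Colourings.

Lemma card_ord_count n (P : pred nat) :
  #|[set k : 'I_n | P (val k)]| = count P (iota 0 n).
Proof.
by rewrite -sum1dep_card -(big_mkord P (fun _ => 1)) sum1_count /index_iota subn0.
Qed.

Definition block_colouring n (s : seq nat) (h : 'S_n) : {ffun 'I_n -> 'I_n.+1} :=
  [ffun k => inord (blk s ((h^-1)%g k))].

Section BlockColouring.
Variables (n : nat) (s : seq nat).

Lemma block_colouringE (h : 'S_n) k :
  size s <= n -> block_colouring s h k = blk s ((h^-1)%g k) :> nat.
Proof. by move=> size_s; rewrite ffunE /= inordK // ltnS (leq_trans (blk_leq_size _ _)). Qed.

Lemma block_colouringM (h g : 'S_n) k :
  block_colouring s (h * g)%g k = block_colouring s h ((g^-1)%g k).
Proof. by rewrite !ffunE invMg permM. Qed.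

Lemma block_colouring_Young_mul (y h : 'S_n) :
  y \in Young n s -> block_colouring s (y * h)%g = block_colouring s h.
Proof.
rewrite inE => /forallP y_Young; apply/ffunP => k; rewrite block_colouringM !ffunE.
by congr inord; rewrite -{2}(permKV y ((h^-1)%g k)) (eqP (y_Young _)).
Qed.

Lemma block_colouring_repr (h : 'S_n) :
  block_colouring s (repr (Young n s :* h)%g) = block_colouring s h.
Proof.
have : h \in (Young n s :* h)%g.
  by rewrite mem_rcoset mulgV inE; apply/forallP => k; rewrite perm1.
move/mem_repr; set z := repr _; rewrite mem_rcoset => z_h.
by rewrite -(mulgKV h z) block_colouring_Young_mul.
Qed.

Lemma block_colouring_inj (h h' : 'S_n) : size s <= n ->
  block_colouring s h = block_colouring s h' -> (Young n s :* h = Young n s :* h')%g.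
Proof.
move=> size_s; have sub h1 h2 : block_colouring s h1 = block_colouring s h2 ->
    (Young n s :* h1 \subset Young n s :* h2)%g.
  move=> eq_h; apply/subsetP => z; rewrite !mem_rcoset !inE => /forallP z_Young.
  apply/forallP => k; rewrite permM.
  move/ffunP/(_ (z k))/(congr1 (@nat_of_ord _)): eq_h; rewrite !block_colouringE // => <-.
  by have := z_Young k; rewrite permM.
by move=> eq_h; apply/eqP; rewrite eqEsubset !sub.
Qed.

Lemma fibre_card_block_colouring (h : 'S_n) i :
  is_comp n s -> fibre_card (block_colouring s h) i = nth 0 s i.
Proof.
move=> s_comp; have size_s := size_comp_leq s_comp.
rewrite /fibre_card (eq_finset (fun k => blk s ((h^-1)%g k) == i)); last first.
  by move=> k; rewrite block_colouringE.
rewrite -sum1dep_card (reindex_inj (@perm_inj _ h)) /=.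
under eq_bigl => k do rewrite permK.
rewrite sum1dep_card (@card_ord_count _ (fun k => blk s k == i)).
by case/andP: s_comp => _ /eqP <-; apply: count_blk.
Qed.

End BlockColouring.

Definition colour_rank n (f : {ffun 'I_n -> 'I_n.+1}) (k : 'I_n) : nat :=
  #|[set k' : 'I_n | (k' < k) && (f k' == f k)]|.

(* The place of [k] when the colour classes of [f] are laid out, in the
   order of their colours, as the consecutive blocks of [s]. *)
Definition block_position n (s : seq nat) (f : {ffun 'I_n -> 'I_n.+1}) (k : 'I_n) : nat :=
  sumn (take (f k) s) + colour_rank f k.

Lemma colour_rank_mono n (f : {ffun 'I_n -> 'I_n.+1}) (k1 k2 : 'I_n) :
  k1 < k2 -> f k1 = f k2 -> colour_rank f k1 < colour_rank f k2.
Proof.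
move=> lt_k12 eq_f; apply: proper_card; apply/properP; split.
  apply/subsetP => k; rewrite !inE => /andP[lt_k /eqP->].
  by rewrite (ltn_trans lt_k lt_k12) eq_f eqxx.
by exists k1; rewrite !inE ?ltnn ?lt_k12 ?eq_f ?eqxx.
Qed.

Section BlockPosition.
Variables (n : nat) (s : seq nat) (g : 'S_n) (f : {ffun 'I_n -> 'I_n.+1}).
Hypotheses (s_comp : is_comp n s) (f_col : f \in colourings s g).

Lemma colour_rank_lt k : colour_rank f k < nth 0 s (f k).
Proof.
rewrite -(fibre_card_colouring f_col (ltn_ord (f k))).
apply: proper_card; apply/properP; split.
  by apply/subsetP => k'; rewrite !inE => /andP[_ /eqP->].
by exists k; rewrite !inE ?ltnn ?eqxx.
Qed.

Lemma blk_block_position k : blk s (block_position s f k) = f k.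
Proof.
apply: blk_take; first exact: colour_lt_size f_col k.
by rewrite /block_position leq_addr ltn_add2l colour_rank_lt.
Qed.

Lemma block_position_lt k : block_position s f k < n.
Proof.
have f_lt := colour_lt_size f_col k; case/andP: s_comp => _ /eqP sum_s.
rewrite -[X in _ < X]sum_s; apply: leq_trans (leq_sumn_take _ (f k).+1).
by rewrite sumn_takeS // ltn_add2l colour_rank_lt.
Qed.

Lemma block_position_inj : injective (block_position s f).
Proof.
move=> k1 k2 eq_pos.
have eq_f : f k1 = f k2.
  by apply: val_inj; rewrite /= -blk_block_position eq_pos blk_block_position.
move: eq_pos; rewrite /block_position eq_f => /addnI eq_rank.
case: (ltngtP k1 k2) => [lt_k12|lt_k21|]; last exact: val_inj.
  by have := colour_rank_mono lt_k12 eq_f; rewrite eq_rank ltnn.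
by have := colour_rank_mono lt_k21 (esym eq_f); rewrite eq_rank ltnn.
Qed.

Lemma block_colouring_onto : exists h : 'S_n, block_colouring s h = f.
Proof.
pose pos k : 'I_n := insubd k (block_position s f k).
have posE k : pos k = block_position s f k :> nat.
  by rewrite -[nat_of_ord _]/(val (pos k)) val_insubd block_position_lt.
have pos_inj : injective pos.
  by move=> k1 k2 /(congr1 (@nat_of_ord _)); rewrite !posE => /block_position_inj.
exists (perm pos_inj)^-1%g; apply/ffunP => k; apply: ord_inj.
by rewrite block_colouringE ?size_comp_leq // invgK permE posE blk_block_position.
Qed.

End BlockPosition.

Lemma chi_colourings n (q : Defs.comp n) (g : 'S_n) :
  chi q g = #|colourings (ssval q) g|.
Proof.
set s := ssval q; have s_comp : is_comp n s := comp_is_comp q.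
have size_s := size_comp_leq s_comp.
have block_colouring_fixed (h : 'S_n) :
    (Young n s :* h :* g = Young n s :* h)%g <->
    (forall k, block_colouring s h (g k) = block_colouring s h k).
  rewrite -rcosetM; split=> [fixed_h k | inv_h].
    have E : block_colouring s (h * g) = block_colouring s h.
      by rewrite -(block_colouring_repr s (h * g)) fixed_h block_colouring_repr.
    by rewrite -[in LHS]E block_colouringM permK.
  apply: block_colouring_inj => //; apply/ffunP => k.
  by rewrite block_colouringM -inv_h permKV.
pose bc (C : {set 'S_n}) := block_colouring s (repr C).
have bc_inj : {in [set C in rcosets (Young n s) [set: 'S_n] | (C :* g)%g == C] &,
    injective bc}.
  move=> C C'; rewrite !inE => /andP[/rcosetsP[h _ ->] _] /andP[/rcosetsP[h' _ ->] _].
  by rewrite /bc !block_colouring_repr; apply: block_colouring_inj.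
rewrite /chi -/s -(card_in_imset bc_inj); apply: eq_card => f.
apply/imsetP/idP => [[C] | f_col].
  rewrite inE => /andP[/rcosetsP[h _ ->] /eqP/block_colouring_fixed inv_h] ->.
  rewrite /bc block_colouring_repr inE; apply/andP; split.
    by apply/forallP => k; rewrite inv_h.
  by apply/forallP => i; rewrite fibre_card_block_colouring.
have [h def_f] := block_colouring_onto s_comp f_col.
exists (Young n s :* h)%g; last by rewrite /bc block_colouring_repr.
rewrite inE; apply/andP; split; first by apply/rcosetsP; exists h; rewrite ?inE.
by apply/eqP/block_colouring_fixed => k; rewrite def_f (colouringJ f_col).
Qed.

Definition joint_card n (f1 f2 : {ffun 'I_n -> 'I_n.+1}) (a b : nat) : nat :=
  #|[set k | (f1 k == a :> nat) && (f2 k == b :> nat)]|.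

Definition joint_mx n (q r : seq nat) (f1 f2 : {ffun 'I_n -> 'I_n.+1}) :
    'M['I_n.+1]_(size q, size r) :=
  \matrix_(i < size q, j < size r) inord (joint_card f1 f2 i j).

Lemma joint_mxE n q r (f1 f2 : {ffun 'I_n -> 'I_n.+1}) i j :
  val (joint_mx q r f1 f2 i j) = joint_card f1 f2 i j.
Proof. by rewrite mxE /= inordK // ltnS /joint_card (leq_trans (max_card _)) ?card_ord. Qed.

Lemma sum_card_colour_classes n (P : pred 'I_n) (f : {ffun 'I_n -> 'I_n.+1}) m :
  (forall k, f k < m) ->
  \sum_(j < m) #|[set k | P k && (f k == j :> nat)]| = #|[set k | P k]|.
Proof.
move=> f_lt; under eq_bigr => j _ do rewrite -sum1dep_card big_mkcond /=.
rewrite exchange_big -sum1dep_card [in RHS]big_mkcond /=; apply: eq_bigr => k _.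
case: (P k); last by rewrite big1.
rewrite (bigD1 (Ordinal (f_lt k))) //= eqxx big1 ?addn0 // => j ne_j.
by case: eqP => // eq_j; case/eqP: ne_j; apply: val_inj.
Qed.

Section JointMatrix.
Variables (n : nat) (q r : seq nat) (g : 'S_n) (f1 f2 : {ffun 'I_n -> 'I_n.+1}).

Lemma sum_joint_card_row a : f2 \in colourings r g ->
  \sum_(j < size r) joint_card f1 f2 a j = fibre_card f1 a.
Proof. by move=> f2_col; apply: sum_card_colour_classes => k; apply: colour_lt_size f2_col k. Qed.

Lemma sum_joint_card_col b : f1 \in colourings q g ->
  \sum_(i < size q) joint_card f1 f2 i b = fibre_card f2 b.
Proof.
move=> f1_col; rewrite /fibre_card.
rewrite -(@sum_card_colour_classes _ (fun k => f2 k == b :> nat) f1 (size q)).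
  by apply: eq_bigr => i _; apply: eq_card => k; rewrite !inE andbC.
by move=> k; apply: colour_lt_size f1_col k.
Qed.

Lemma joint_mx_inS : is_comp n q -> is_comp n r ->
  f1 \in colourings q g -> f2 \in colourings r g -> inS (joint_mx q r f1 f2).
Proof.
move=> q_comp r_comp f1_col f2_col; apply/andP; split; apply/forallP => i.
  under eq_bigr => j _ do rewrite joint_mxE.
  rewrite sum_joint_card_row // (fibre_card_colouring f1_col) //.
  by rewrite ltnS (leq_trans (ltnW (ltn_ord i)) (size_comp_leq q_comp)).
under eq_bigr => j _ do rewrite joint_mxE.
rewrite sum_joint_card_col // (fibre_card_colouring f2_col) //.
by rewrite ltnS (leq_trans (ltnW (ltn_ord i)) (size_comp_leq r_comp)).
Qed.

Hypotheses (f1_lt : forall k, f1 k < size q) (f2_lt : forall k, f2 k < size r).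
Hypothesis joint_inS : inS (joint_mx q r f1 f2).

Lemma colouring_of_joint_mx_l : (forall k, f1 (g k) = f1 k) -> f1 \in colourings q g.
Proof.
move=> f1J; case/andP: joint_inS => /forallP row_sums _; rewrite inE.
apply/andP; split; first by apply/forallP => k; rewrite f1J.
apply/forallP => a; case: (ltnP a (size q)) => a_lt.
  have := eqP (row_sums (Ordinal a_lt)); under eq_bigr => j _ do rewrite joint_mxE.
  by move=> /= <-; rewrite sum_card_colour_classes.
rewrite nth_default // /fibre_card cards_eq0; apply/eqP/setP => k; rewrite !inE.
by apply/negP => /eqP f1k; have := f1_lt k; rewrite f1k ltnNge a_lt.
Qed.

Lemma colouring_of_joint_mx_r : (forall k, f2 (g k) = f2 k) -> f2 \in colourings r g.
Proof.
move=> f2J; case/andP: joint_inS => _ /forallP col_sums; rewrite inE.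
apply/andP; split; first by apply/forallP => k; rewrite f2J.
apply/forallP => b; case: (ltnP b (size r)) => b_lt.
  have := eqP (col_sums (Ordinal b_lt)); under eq_bigr => i _ do rewrite joint_mxE.
  move=> /= <-; rewrite /fibre_card -(@sum_card_colour_classes _ _ f1 (size q)) //.
  by apply/eqP; apply: eq_bigr => i _; apply: eq_card => k; rewrite !inE andbC.
rewrite nth_default // /fibre_card cards_eq0; apply/eqP/setP => k; rewrite !inE.
by apply/negP => /eqP f2k; have := f2_lt k; rewrite f2k ltnNge b_lt.
Qed.

End JointMatrix.

Definition colouring_pairs n (q r : seq nat) (g : 'S_n) (Z : 'M['I_n.+1]_(size q, size r)) :=
  [set x in setX (colourings q g) (colourings r g) | joint_mx q r x.1 x.2 == Z].

Lemma card_colourings_mul n (q r : seq nat) (g : 'S_n) :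
  is_comp n q -> is_comp n r ->
  #|colourings q g| * #|colourings r g| =
  \sum_(Z : 'M['I_n.+1]_(size q, size r) | inS Z) #|colouring_pairs g Z|.
Proof.
move=> q_comp r_comp; rewrite -cardsX -sum1_card.
rewrite (partition_big (fun x => joint_mx q r x.1 x.2) (@inS n q r)); last first.
  by move=> [f1 f2]; rewrite in_setX => /andP[]; apply: joint_mx_inS.
by apply: eq_bigr => Z _; rewrite -sum1_card; apply: eq_bigl => x; rewrite !inE.
Qed.

Definition coords a b (c : 'I_a * 'I_b) : nat * nat := (val c.1, val c.2).

Lemma coords_inj a b : injective (@coords a b).
Proof. by move=> [i1 j1] [i2 j2] [/val_inj-> /val_inj->]. Qed.

Definition cells n (q r : seq nat) (Z : 'M['I_n.+1]_(size q, size r)) :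
    seq ('I_(size q) * 'I_(size r)) :=
  [seq c <- [seq (i, j) | i <- enum 'I_(size q), j <- enum 'I_(size r)] |
    val (Z c.1 c.2) != 0].

Definition cell_coords n (q r : seq nat) (Z : 'M['I_n.+1]_(size q, size r)) :=
  map (@coords _ _) (cells Z).

Section Cells.
Variables (n : nat) (q r : seq nat) (Z : 'M['I_n.+1]_(size q, size r)).

Lemma cZ_cells : cZ Z = [seq val (Z c.1 c.2) | c <- cells Z].
Proof.
rewrite /cZ /cells -(map_allpairs (fun c : 'I__ * 'I__ => val (Z c.1 c.2)) pair).
by rewrite filter_map.
Qed.

Lemma size_cZ : size (cZ Z) = size (cells Z).
Proof. by rewrite cZ_cells size_map. Qed.

Lemma cells_uniq : uniq (cells Z).
Proof. by apply/filter_uniq/allpairs_uniq; rewrite ?enum_uniq // => -[? ?] [? ?]. Qed.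

Lemma mem_cells i j : ((i, j) \in cells Z) = (val (Z i j) != 0).
Proof. by rewrite mem_filter /= allpairs_f ?mem_enum ?andbT. Qed.

Lemma index_cell_coords c : index (coords c) (cell_coords Z) = index c (cells Z).
Proof. exact/index_map/coords_inj. Qed.

Lemma nth_cell_coords c :
  c \in cells Z -> nth (0, 0) (cell_coords Z) (index c (cells Z)) = coords c.
Proof. by move=> c_Z; rewrite -index_cell_coords nth_index // map_f. Qed.

Lemma nth_cZ_index i j : nth 0 (cZ Z) (index (i, j) (cells Z)) = val (Z i j).
Proof.
case: (boolP ((i, j) \in cells Z)) => ij_Z.
  by rewrite cZ_cells (nth_map (i, j)) ?index_mem // nth_index.
rewrite nth_default; last by rewrite size_cZ leqNgt index_mem.
by move: ij_Z; rewrite mem_cells negbK => /eqP.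
Qed.

Lemma nth_cells p : p < size (cells Z) -> exists2 c, c \in cells Z &
  [/\ nth (0, 0) (cell_coords Z) p = coords c, index c (cells Z) = p
    & nth 0 (cZ Z) p = val (Z c.1 c.2)].
Proof.
case E: (cells Z) => [|c0 cs] //; rewrite -E => p_lt.
exists (nth c0 (cells Z) p); first exact: mem_nth.
by rewrite /cell_coords (nth_map c0) // index_uniq ?cells_uniq // cZ_cells (nth_map c0).
Qed.

Lemma sumn_cZ : inS Z -> sumn (cZ Z) = sumn q.
Proof.
case/andP => /forallP row_sums _.
have sumn_filter_neq0 (s : seq nat) : sumn [seq a <- s | a != 0] = sumn s.
  by elim: s => //= a s IHs; case: eqP => [->|_] /=; rewrite IHs.
rewrite /cZ sumn_filter_neq0.
rewrite -(map_allpairs (fun c : 'I__ * 'I__ => val (Z c.1 c.2)) pair).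
rewrite sumnE big_map big_allpairs /= big_enum /= sumnE (big_nth 0) big_mkord.
by apply: eq_bigr => i _; rewrite -(eqP (row_sums i)) big_enum.
Qed.

Lemma cZ_comp : is_comp n q -> inS Z -> is_comp n (cZ Z).
Proof.
case/andP=> _ /eqP sum_q Z_inS; rewrite /is_comp sumn_cZ // sum_q eqxx andbT.
by apply/allP => a; rewrite mem_filter lt0n => /andP[].
Qed.

Lemma size_cells_leq : is_comp n q -> inS Z -> size (cells Z) <= n.
Proof. by move=> q_comp Z_inS; rewrite -size_cZ size_comp_leq ?cZ_comp. Qed.

End Cells.

(* A pair of colourings with joint matrix [Z] is the same as a colouring by the
   cells of [Z], i.e. by the positions in [cZ Z]. *)
Definition merge_colouring n (q r : seq nat) (Z : 'M['I_n.+1]_(size q, size r))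
    (x : {ffun 'I_n -> 'I_n.+1} * {ffun 'I_n -> 'I_n.+1}) : {ffun 'I_n -> 'I_n.+1} :=
  [ffun k => inord (index (val (x.1 k), val (x.2 k)) (cell_coords Z))].

Definition split_colouring n (q r : seq nat) (Z : 'M['I_n.+1]_(size q, size r))
    (h : {ffun 'I_n -> 'I_n.+1}) : {ffun 'I_n -> 'I_n.+1} * {ffun 'I_n -> 'I_n.+1} :=
  ([ffun k => inord (nth (0, 0) (cell_coords Z) (h k)).1],
   [ffun k => inord (nth (0, 0) (cell_coords Z) (h k)).2]).

Section MergeSplit.
Variables (n : nat) (q r : seq nat) (g : 'S_n) (Z : 'M['I_n.+1]_(size q, size r)).
Hypotheses (q_comp : is_comp n q) (r_comp : is_comp n r) (Z_inS : inS Z).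

Let size_cells := size_cells_leq q_comp Z_inS.

Lemma split_colouringE h k : h \in colourings (cZ Z) g ->
  exists2 c, c \in cells Z & [/\ (split_colouring Z h).1 k = c.1 :> nat,
    (split_colouring Z h).2 k = c.2 :> nat & index c (cells Z) = h k].
Proof.
move=> h_col; have hk_lt : h k < size (cells Z) by rewrite -size_cZ (colour_lt_size h_col).
have [c c_Z [nth_c idx_c _]] := nth_cells hk_lt; exists c => //.
have ord_lt m (i : 'I_m) : m <= n -> i < n.+1.
  by move=> m_le; rewrite ltnS ltnW ?(leq_trans _ m_le).
by rewrite !ffunE nth_c /= !inordK ?ord_lt ?size_comp_leq.
Qed.

Lemma merge_colouringE x k : x \in colouring_pairs g Z ->
  exists2 c, c \in cells Z & [/\ x.1 k = c.1 :> nat, x.2 k = c.2 :> nat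
    & merge_colouring Z x k = index c (cells Z) :> nat].
Proof.
case: x => f1 f2; rewrite in_set in_setX => /andP[/andP[f1_col f2_col] /eqP joint_Z] /=.
pose c := (Ordinal (colour_lt_size f1_col k), Ordinal (colour_lt_size f2_col k)).
have c_Z : c \in cells Z.
  rewrite mem_cells -joint_Z joint_mxE -lt0n card_gt0; apply/set0Pn; exists k.
  by rewrite inE /= !eqxx.
exists c => //; split => //; rewrite ffunE -[(val _, val _)]/(coords c).
by rewrite index_cell_coords inordK // ltnS (leq_trans _ size_cells) // ltnW // index_mem.
Qed.

Lemma merge_colouringK :
  {in colouring_pairs g Z, cancel (merge_colouring Z) (split_colouring Z)}.
Proof.
move=> [f1 f2] x_pairs; congr pair; apply/ffunP => k; rewrite ffunE;
  have [c c_Z [/= f1k f2k ->]] := merge_colouringE k x_pairs;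
  by rewrite nth_cell_coords //= -?f1k -?f2k inord_val.
Qed.

Lemma split_colouringK :
  {in colourings (cZ Z) g, cancel (split_colouring Z) (merge_colouring Z)}.
Proof.
move=> h h_col; apply/ffunP => k; apply: val_inj; rewrite ffunE /=.
have [c c_Z [-> -> <-]] := split_colouringE k h_col.
rewrite -[(val _, val _)]/(coords c) index_cell_coords inordK //.
by rewrite ltnS (leq_trans _ size_cells) // ltnW // index_mem.
Qed.

Lemma merge_colouring_in x :
  x \in colouring_pairs g Z -> merge_colouring Z x \in colourings (cZ Z) g.
Proof.
case: x => f1 f2 x_pairs; have := x_pairs; rewrite in_set in_setX.
move=> /andP[/andP[f1_col f2_col] /eqP joint_Z]; rewrite inE; apply/andP; split.
  by apply/forallP => k; rewrite !ffunE /= !(colouringJ f1_col) (colouringJ f2_col).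
apply/forallP => p; apply/eqP; case: (ltnP p (size (cells Z))) => p_lt; last first.
  rewrite nth_default ?size_cZ // /fibre_card; apply/eqP; rewrite cards_eq0.
  apply/eqP/setP => k; rewrite !inE; have [c c_Z [_ _ ->]] := merge_colouringE k x_pairs.
  by apply/negP => /eqP idx_c; move: p_lt; rewrite -idx_c leqNgt index_mem c_Z.
have [c c_Z [_ idx_c ->]] := nth_cells p_lt.
rewrite -[in RHS]joint_Z joint_mxE /fibre_card; apply: eq_card => k; rewrite !inE.
have [d d_Z [f1k f2k ->]] := merge_colouringE k x_pairs; rewrite /= in f1k f2k.
by rewrite /= f1k f2k -idx_c index_eq_mem // -(inj_eq (@coords_inj _ _)).
Qed.

Lemma split_colouring_in h :
  h \in colourings (cZ Z) g -> split_colouring Z h \in colouring_pairs g Z.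
Proof.
move=> h_col.
have joint_Z : joint_mx q r (split_colouring Z h).1 (split_colouring Z h).2 = Z.
  apply/matrixP => i j; apply: val_inj; rewrite joint_mxE -nth_cZ_index.
  rewrite -(fibre_card_colouring h_col); last first.
    by rewrite ltnS (leq_trans _ size_cells) // index_size.
  apply: eq_card => k; rewrite !inE.
  have [c c_Z [-> -> idx_c]] := split_colouringE k h_col; rewrite -[val (h k)]idx_c.
  by rewrite index_eq_mem // -(inj_eq (@coords_inj _ _)).
have [split_lt1 split_lt2] : (forall k, (split_colouring Z h).1 k < size q) /\
                              (forall k, (split_colouring Z h).2 k < size r).
  by split=> k; have [c _ [E1 E2 _]] := split_colouringE k h_col; rewrite ?E1 ?E2 ltn_ord.
have joint_inS : inS (joint_mx q r (split_colouring Z h).1 (split_colouring Z h).2).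
  by rewrite joint_Z.
rewrite in_set in_setX joint_Z eqxx andbT; apply/andP; split.
  apply: (colouring_of_joint_mx_l split_lt1 split_lt2 joint_inS) => k.
  by rewrite !ffunE (colouringJ h_col).
apply: (colouring_of_joint_mx_r split_lt1 split_lt2 joint_inS) => k.
by rewrite !ffunE (colouringJ h_col).
Qed.

Lemma card_colouring_pairs : #|colouring_pairs g Z| = #|colourings (cZ Z) g|.
Proof.
exact: card_in_bij merge_colouring_in split_colouring_in merge_colouringK split_colouringK.
Qed.

End MergeSplit.

Lemma chi_mul n (q r : Defs.comp n) (g : 'S_n) :
  chi q g * chi r g =
  \sum_(c : Defs.comp n) struct_const n (ssval q) (ssval r) (ssval c) * chi c g.
Proof.
have q_comp := comp_is_comp q; have r_comp := comp_is_comp r.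
rewrite !chi_colourings card_colourings_mul //.
under [RHS]eq_bigr => c _.
  rewrite chi_colourings /struct_const -sum1dep_card big_distrl /= big_mkcond /=.
  under eq_bigr => Z _ do rewrite mul1n.
  over.
rewrite exchange_big [LHS]big_mkcond /=; apply: eq_bigr => Z _.
case: (boolP (inS Z)) => Z_inS /=; last by rewrite big1.
have cZ_mem : cZ Z \in comps n by apply/mem_comps/cZ_comp.
rewrite (bigD1 (SeqSub cZ_mem)) //= eqxx card_colouring_pairs // big1 ?addn0 //.
by move=> c /eqP ne_c; case: eqP => // eq_c; case: ne_c; apply: val_inj.
Qed.

Import GRing.Theory.
Local Open Scope ring_scope.

Definition phi_at n p (g : 'S_n) (x : Sig n p) : 'F_p :=
  \sum_(q : Defs.comp n) x q * (chi q g)%:R.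

Section PhiAt.
Variables (n p : nat) (g : 'S_n).

Lemma phi_at0 : phi_at g (0 : Sig n p) = 0.
Proof. by rewrite /phi_at big1 // => q _; rewrite ffunE mul0r. Qed.

Lemma phi_atD (x y : Sig n p) : phi_at g (x + y) = phi_at g x + phi_at g y.
Proof. by rewrite /phi_at -big_split; apply: eq_bigr => q _; rewrite ffunE mulrDl. Qed.

Lemma phi_atZ (c : 'F_p) (x : Sig n p) : phi_at g [ffun i => c * x i] = c * phi_at g x.
Proof. by rewrite /phi_at mulr_sumr; apply: eq_bigr => q _; rewrite ffunE mulrA. Qed.

Lemma phi_atM (x y : Sig n p) : phi_at g (smul x y) = phi_at g x * phi_at g y.
Proof.
rewrite /phi_at /smul mulr_suml; under eq_bigr => c _ do rewrite ffunE mulr_suml.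
rewrite exchange_big /=; apply: eq_bigr => q _; rewrite mulr_sumr.
under eq_bigr => c _ do rewrite mulr_suml.
rewrite exchange_big /=; apply: eq_bigr => r _.
under eq_bigr => c _ do rewrite ffunE -mulrA -natrM.
by rewrite -mulr_sumr -natr_sum -chi_mul natrM mulrACA.
Qed.

Lemma left_ideal_phi_at_ker : left_ideal [set y : Sig n p | phi_at g y == 0].
Proof.
split=> [|x y|c x|a x]; rewrite !inE ?phi_at0 ?phi_atD ?phi_atZ ?phi_atM //.
- by move=> /eqP-> /eqP->; rewrite addr0.
- by move=> /eqP->; rewrite mulr0.
- by move=> /eqP->; rewrite mulr0.
Qed.

Lemma maximal_left_ideal_phi_at_ker (x : Sig n p) :
  phi_at g x != 0 -> maximal_left_ideal [set y : Sig n p | phi_at g y == 0].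
Proof.
move=> phi_x; split; first exact: left_ideal_phi_at_ker.
  by apply/eqP => kerT; move: (in_setT x); rewrite -kerT inE (negbTE phi_x).
move=> J [_ JD JZ _] ker_J.
case: (boolP (J \subset [set y | phi_at g y == 0])) => [J_ker | ].
  by left; apply/eqP; rewrite eqEsubset J_ker ker_J.
case/subsetPn => y y_J; rewrite inE => phi_y; right; apply/setP => z; rewrite inE.
pose c := phi_at g z / phi_at g y.
have -> : z = (z + [ffun i => - c * y i]) + [ffun i => c * y i].
  by apply/ffunP => i; rewrite !ffunE mulNr addrNK.
apply: JD; last exact: JZ.
by apply: (subsetP ker_J); rewrite inE phi_atD phi_atZ mulNr divfK ?subrr.
Qed.

End PhiAt.

Theorem lemma2p2 (n p : nat) : (1 <= n)%N -> prime p ->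
  forall x : Sig n p, in_radical x -> in_ker_phi x.
Proof.
move=> _ _ x x_rad g; apply/eqP/negPn/negP => phi_x.
by have := x_rad _ (maximal_left_ideal_phi_at_ker phi_x); rewrite inE (negbTE phi_x).
Qed.
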